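(* Let $T$ be a transitive tournament with $n$ vertices and let $k$ be a nonnegative integer. Then $T$ has at most $A\cdot\exp(C\sqrt{k})\cdot(n+1)$ $k$-cuts, where $C=\pi\sqrt{2/3}$ and $A$ is a constant such that the partition numbers satisfy $p(m)\le \frac{A}{m+1}\exp(C\sqrt{m})$ for every nonnegative integer $m$.
   Context: A transitive tournament with ordering $(v_1,\dots,v_n)$ is the tournament on $\{v_1,\dots,v_n\}$ in which $(v_i,v_j)$ is an arc iff $i<j$. A $k$-cut of a digraph $T$ is an ordered partition $(X,Y)$ of $V(T)$ (either part may be empty) such that there are at most $k$ arcs $(u,v)\in E(T)$ with $u\in Y$ and $v\in X$. The partition number $p(m)$ is the number of multisets of positive integers summing to $m$. It is known (Hardy–Ramanujan) that there is an absolute constant $A$ with $p(m)\le\frac{A}{m+1}\exp(\pi\sqrt{2/3}\sqrt{m})$ for all $m\ge 0$. *)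

From Stdlib Require Import Reals.
From mathcomp Require Import all_boot.

Set Implicit Arguments.
Unset Strict Implicit.
Unset Printing Implicit Defensive.

Definition transitive_tournament_with_ordering (V : finType) (E : rel V) (s : seq V) : Prop :=
  [/\ uniq s, (forall x : V, x \in s) & (forall u w : V, E u w = (index u s < index w s))].

Definition is_transitive_tournament (V : finType) (E : rel V) : Prop :=
  exists s : seq V, transitive_tournament_with_ordering E s.

Definition back_arcs (V : finType) (E : rel V) (X Y : {set V}) : nat :=
  #|[set p : V * V | [&& E p.1 p.2, p.1 \in Y & p.2 \in X]]|.

Definition is_kcut (V : finType) (E : rel V) (k : nat) (X Y : {set V}) : bool :=
  [&& X :|: Y == [set: V], X :&: Y == set0 & back_arcs E X Y <= k].

Definition num_kcuts (V : finType) (E : rel V) (k : nat) : nat :=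
  #|[set XY : {set V} * {set V} | is_kcut E k XY.1 XY.2]|.

(* A multiset is encoded by its multiplicity function: f i = multiplicity of the
   part i+1 (parts are at most m and multiplicities at most m, so these bounds
   lose nothing). *)
Definition partition_number (m : nat) : nat :=
  #|[set f : {ffun 'I_m -> 'I_m.+1} | \sum_(i < m) (i.+1 * f i) == m]|.

From mathcomp Require Import all_boot.
From Stdlib Require Import Reals.

Set Implicit Arguments.
Unset Strict Implicit.
Unset Printing Implicit Defensive.

(* Let (v_1, ..., v_n) be the ordering of T. A k-cut (X, Y) is determined by Y
   (X is its complement), hence by the bit word b_i = [v_i \in Y], and its back
   arcs are exactly the inversions of b: pairs i < j with b_i = true and
   b_j = false. So it suffices to count words of length n with at most k
   inversions.

   To such a word b with j <= k inversions attach, for each true letter, the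
   number of false letters after it; the nonzero values form a partition of j
   (its "profile"). Adding k - j parts equal to 1 gives a partition of k. The word
   is recovered from its number of false letters, its number j of inversions,
   and this partition of k, which gives at most (n+1)(k+1)p(k) words. The
   Hardy-Ramanujan type bound p(k) <= A/(k+1) exp(C sqrt k) then cancels the
   factor k+1. *)

Fixpoint inversions (b : seq bool) : nat :=
  if b is x :: b' then x * count negb b' + inversions b' else 0.

(* profile b i = number of true letters of b followed by exactly i+1 false
   letters: the multiplicity of the part i+1 in the partition of inversions b. *)
Fixpoint profile (b : seq bool) (i : nat) : nat :=
  if b is x :: b' then (x && (count negb b' == i.+1)) + profile b' i else 0.

Lemma profile_le_inversions b i : profile b i <= inversions b.
Proof.
elim: b => [//|[] b' IH] /=; rewrite ?mul0n leq_add //.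
by case: eqP => [->|].
Qed.

Lemma profile_eq0 b i : inversions b <= i -> profile b i = 0.
Proof.
elim: b => [//|[] b' IH] /= le_bi; last by rewrite IH.
rewrite IH ?(leq_trans (leq_addl _ _) le_bi) // addn0.
by case: eqP => // cnt; move: le_bi; rewrite cnt mul1n addSn ltnNge leq_addr.
Qed.

Lemma profile_eq0_count b i : count negb b <= i -> profile b i = 0.
Proof.
elim: b => [//|x b' IH] /= le_bi.
rewrite IH ?(leq_trans (leq_addl _ _) le_bi) // addn0.
by case: x le_bi; case: eqP => // -> /=; rewrite ltnn.
Qed.

Lemma sum_part_indicator c N : c <= N -> \sum_(i < N) i.+1 * (c == i.+1) = c.
Proof.
case: c => [_|c lt_cN]; first by rewrite big1 // => i _; rewrite muln0.
rewrite (bigD1 (Ordinal lt_cN)) //= eqxx muln1 big1 ?addn0 // => i ne_ic.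
by rewrite eqSS eq_sym -[c]/(val (Ordinal lt_cN)) val_eqE (negbTE ne_ic) muln0.
Qed.

Lemma sum_profile b N : inversions b <= N -> \sum_(i < N) i.+1 * profile b i = inversions b.
Proof.
elim: b => [|x b' IH] /= le_bN; first by rewrite big1 // => i _; rewrite muln0.
under eq_bigr => i _ do rewrite mulnDr.
rewrite big_split /= IH ?(leq_trans (leq_addl _ _) le_bN) //; congr (_ + _).
case: x le_bN => /= [le_bN|_]; last by rewrite mul0n big1 // => i _; rewrite muln0.
by rewrite mul1n sum_part_indicator // -(mul1n (count _ _)) (leq_trans (leq_addr _ _) le_bN).
Qed.

(* The first letter is true iff there are no false letters at all, or the
   largest possible part (the total number of false letters) occurs. *)
Lemma head_from_profile x b :
  x = (count negb (x :: b) == 0) || (0 < profile (x :: b) (count negb (x :: b)).-1).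
Proof.
case: x => /=; first by case: (count negb b) => //= c; rewrite eqxx.
by rewrite !add0n profile_eq0_count.
Qed.

Lemma profile_inj b b' : size b = size b' -> count negb b = count negb b' ->
  profile b =1 profile b' -> b = b'.
Proof.
elim: b b' => [|x b IH] [|x' b'] // [eq_size] eq_count eq_profile.
have eq_x : x = x'.
  by rewrite (head_from_profile x b) (head_from_profile x' b') eq_count eq_profile.
move: eq_count eq_profile; rewrite -{}eq_x /= => /addnI eq_count eq_profile.
congr (_ :: _); apply: IH => // i.
by apply/(@addnI (x && (count negb b == i.+1))); rewrite {2}eq_count eq_profile.
Qed.

Section LowInversions.
Variables n k : nat.

(* The profile of b completed to a partition of k by k - inversions b parts
   equal to 1; the multiplicity of part i+1 is stored at index i. *)
Definition padded_profile (b : seq bool) : {ffun 'I_k -> 'I_k.+1} :=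
  [ffun i : 'I_k => inord (profile b i + (i == 0 :> nat) * (k - inversions b))].

(* The multiplicities of the padded profile do not need truncation. *)
Lemma padded_profileE b (i : 'I_k) : inversions b <= k ->
  padded_profile b i = profile b i + (i == 0 :> nat) * (k - inversions b) :> nat.
Proof.
move=> le_bk; rewrite ffunE inordK // ltnS -[X in _ <= X](subnKC le_bk).
by rewrite leq_add ?profile_le_inversions //; case: (i == 0 :> nat); rewrite ?mul1n ?mul0n.
Qed.

Lemma padded_profile_partition b : inversions b <= k ->
  \sum_(i < k) i.+1 * padded_profile b i = k.
Proof.
move=> le_bk; under eq_bigr => i _ do rewrite padded_profileE // mulnDr.
rewrite big_split /= sum_profile //.
case: k le_bk => [|k'] le_bk; first by rewrite big_ord0 addn0; apply/eqP; rewrite -leqn0.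
rewrite big_ord_recl big1 => [|i _]; last by rewrite mul0n muln0.
by rewrite /= !mul1n addn0 subnKC.
Qed.

Definition bit_code (b : n.-tuple bool) : 'I_n.+1 * 'I_k.+1 * {ffun 'I_k -> 'I_k.+1} :=
  (inord (count negb b), inord (inversions b), padded_profile b).

(* Injectivity: the number of inversions fixes the padding, which can then be
   removed to recover the profile. *)
Lemma bit_code_inj : {in [pred b : n.-tuple bool | inversions b <= k] &, injective bit_code}.
Proof.
move=> b b'; rewrite !inE => le_bk le_b'k [/(congr1 val) eq_count /(congr1 val) eq_inv eq_pad].
have count_lt (c : n.-tuple bool) : count negb c < n.+1.
  by rewrite ltnS -{2}(size_tuple c) count_size.
move: eq_count eq_inv; rewrite /= !inordK // => eq_count eq_inv.
apply/val_inj/profile_inj => //; first by rewrite !size_tuple.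
move=> i; case: (ltnP i k) => [lt_ik|le_ki]; last first.
  by rewrite !profile_eq0 // (leq_trans _ le_ki).
move/ffunP: eq_pad => /(_ (Ordinal lt_ik)) /(congr1 (@nat_of_ord _)).
by rewrite !padded_profileE // eq_inv => /addIn.
Qed.

Lemma card_low_inversions :
  #|[set b : n.-tuple bool | inversions b <= k]| <= n.+1 * k.+1 * partition_number k.
Proof.
rewrite -(card_in_imset (f := bit_code)); last first.
  by move=> b b'; rewrite !inE; exact: bit_code_inj.
have -> : n.+1 * k.+1 * partition_number k =
    #|setX [set: 'I_n.+1 * 'I_k.+1] [set f : {ffun 'I_k -> 'I_k.+1} | \sum_(i < k) i.+1 * f i == k]|.
  by rewrite cardsX cardsT card_prod !card_ord.
apply/subset_leq_card/subsetP => _ /imsetP[b le_bk ->].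
by rewrite !inE /= in le_bk *; rewrite padded_profile_partition.
Qed.

End LowInversions.

Lemma sum_ordered_pairs (T : eqType) (t : seq T) (Y : pred T) : uniq t ->
  \sum_(u <- t) \sum_(w <- t) [&& index u t < index w t, Y u & ~~ Y w]
  = inversions (map Y t).
Proof.
elim: t => [|v t IH]; first by rewrite big_nil.
rewrite cons_uniq => /andP[v_notin_t uniq_t].
have index_v : index v (v :: t) = 0 by rewrite /= eqxx.
have index_t u : u \in t -> index u (v :: t) = (index u t).+1.
  by move=> u_in_t /=; case: eqP => // eq_vu; rewrite eq_vu u_in_t in v_notin_t.
rewrite map_cons [inversions _]/= -(IH uniq_t) !big_cons index_v ltnn add0n.
congr (_ + _).
  rewrite (eq_big_seq (fun w => (Y v && ~~ Y w) : nat)) => [|w /index_t -> //].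
  case: (Y v); last by rewrite big1.
  rewrite mul1n count_map -sum1_count [RHS]big_mkcond.
  by apply: eq_bigr => w _ /=; case: (Y w).
apply: eq_big_seq => u u_in_t; rewrite big_cons index_v index_t // ltn0 add0n.
by apply: eq_big_seq => w w_in_t; rewrite !index_t.
Qed.

Lemma kcut_complement (V : finType) (E : rel V) k X Y :
  is_kcut E k X Y -> X = ~: Y /\ back_arcs E (~: Y) Y <= k.
Proof.
case/and3P=> /eqP/setP cover /eqP/setP no_overlap back_le.
suff compl_X : X = ~: Y by rewrite -compl_X.
apply/setP => v; move: (cover v) (no_overlap v); rewrite !inE.
by case: (v \in X); case: (v \in Y).
Qed.

Section TransitiveTournament.
Variables (V : finType) (E : rel V) (s : seq V).
Hypothesis ordering : transitive_tournament_with_ordering E s.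

Definition membership_bits (Y : {set V}) : (size s).-tuple bool :=
  map_tuple (fun v => v \in Y) (in_tuple s).

Lemma card_vertices : #|V| = size s.
Proof.
case: ordering => uniq_s mem_s _.
by rewrite -(card_uniqP uniq_s); apply: eq_card => v; rewrite mem_s.
Qed.

Lemma back_arcs_inversions Y : back_arcs E (~: Y) Y = inversions (membership_bits Y).
Proof.
case: ordering => uniq_s mem_s arcE.
have enum_s : perm_eq (index_enum V) s.
  by apply: uniq_perm; rewrite ?index_enum_uniq // => v; rewrite mem_index_enum mem_s.
rewrite /back_arcs -sum1dep_card big_mkcond /=.
rewrite -[inversions _]/(inversions (map (mem Y) s)) -(sum_ordered_pairs _ uniq_s).
rewrite -(perm_big _ enum_s); under [in RHS]eq_bigr => u _ do rewrite -(perm_big _ enum_s).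
rewrite pair_big; apply: eq_bigr => -[u w] _.
by rewrite /= arcE in_setC; case: [&& _, _ & _].
Qed.

(* Since the ordering covers V, the indicator word determines Y. *)
Lemma membership_bits_inj : injective membership_bits.
Proof.
case: ordering => _ mem_s _ Y Y' /(congr1 val) /eq_in_map eq_bits.
by apply/setP => v; apply: eq_bits.
Qed.

Lemma num_kcuts_le k :
  num_kcuts E k <= #|[set b : (size s).-tuple bool | inversions b <= k]|.
Proof.
have kcutE XY : XY \in [set XY | is_kcut E k XY.1 XY.2] ->
    XY.1 = ~: XY.2 /\ inversions (membership_bits XY.2) <= k.
  by rewrite inE -back_arcs_inversions => /kcut_complement.
rewrite /num_kcuts -(card_in_imset (f := fun XY => membership_bits XY.2)).
  apply/subset_leq_card/subsetP => _ /imsetP[XY /kcutE[_ le_k] ->].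
  by rewrite inE.
by move=> [X Y] [X' Y'] /kcutE[/= -> _] /kcutE[/= -> _] /membership_bits_inj /= ->.
Qed.

End TransitiveTournament.

Lemma weighted_partition_bound (A c : R) (k : nat) :
  (INR (partition_number k) <= A / INR (k + 1) * c)%R ->
  (INR (k.+1 * partition_number k) <= A * c)%R.
Proof.
move=> bound_k; have pos_k : (0 < INR (k + 1))%R by apply: lt_0_INR; apply/ltP; rewrite addn1.
rewrite mult_INR -addn1.
apply: (Rle_trans _ _ _ (Rmult_le_compat_l _ _ _ (Rlt_le _ _ pos_k) bound_k)).
by right; field; apply: Rgt_not_eq.
Qed.

Theorem mainTheorem7 (V : finType) (E : rel V) (k : nat) (A : R) :
  is_transitive_tournament E ->
  (forall m : nat,
     (INR (partition_number m)
      <= A / INR (m + 1) * exp (PI * sqrt (2 / 3) * sqrt (INR m)))%R) ->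
  (INR (num_kcuts E k)
   <= A * exp (PI * sqrt (2 / 3) * sqrt (INR k)) * INR (#|V| + 1))%R.
Proof.
move=> [s ordering] partition_bound.
have count_bound : num_kcuts E k <= (#|V| + 1) * (k.+1 * partition_number k).
  rewrite mulnA addn1 (card_vertices ordering).
  exact: leq_trans (num_kcuts_le ordering k) (card_low_inversions _ _).
apply: Rle_trans (le_INR _ _ (leP count_bound)) _.
rewrite mult_INR Rmult_comm; apply: Rmult_le_compat_r; first exact: pos_INR.
exact: weighted_partition_bound.
Qed.
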